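(* For $T\in D(\nu)$, let $S_T$ be the set of all $\lambda_1\in\mathcal P$ such that $T\in\underline{\mathrm{CLR}}^{\lambda(\lambda_1)}_{\alpha(\lambda_1),\nu}$. Then $S_T=\lambda_{\min}(T)+\mathcal P=\{\lambda_{\min}(T)+\delta:\delta\in\mathcal P\}$.
   Context: Identify a partition $\lambda=(a_1\ge a_2\ge\cdots)$ with $\sum_ja_j\epsilon_j$ in $\Lambda=\bigoplus_{j\ge1}\mathbb Z\epsilon_j$; put $\omega_i=\epsilon_1+\dots+\epsilon_i$; partitions are exactly elements with all $\omega$-coordinates $\ge0$, and addition of partitions is addition in $\Lambda$. For $x,y\in\Lambda$, $y\le x$ means $x-y$ has all $\omega$-coordinates $\ge0$. $\mathcal P$ = partitions, $\mathcal P^k$ = $k$-tuples. $SST(\nu)$ = semistandard tableaux of shape $\nu$ with entries in $\mathbb Z_{>0}$, with the standard $\mathfrak{gl}_\infty$-crystal structure. For $T\in SST(\nu)$: $\mathrm{wt}(T)=\sum_j(\#\text{entries }j)\epsilon_j$, $\varepsilon_i(T)=\max\{m\ge0:\tilde e_i^mT\ne0\}$, $\varepsilon(T)=\sum_i\varepsilon_i(T)\omega_i$. $\mathrm{CLR}^\lambda_{\alpha,\nu}=\{T\in SST(\nu):\varepsilon(T)\le\alpha,\ \alpha+\mathrm{wt}(T)=\lambda\}$. Fix $k\ge1$, partitions $\nu=(\nu_1^+,\nu_1^-,\dots,\nu_k^+,\nu_k^-)$; indices cyclic mod $k$ ($\lambda_0:=\lambda_k$). $\underline{SST}(\nu)=\prod_iSST(\nu_i^+)\times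 SST(\nu_i^-)$, $T=(T_1^+,T_1^-,\dots,T_k^+,T_k^-)$, $\mathrm{wt}(T_i)=\mathrm{wt}(T_i^+)-\mathrm{wt}(T_i^-)$. $\underline{\mathrm{CLR}}^\lambda_{\alpha,\nu}=\prod_{i=1}^k\mathrm{CLR}^{\lambda_i}_{\alpha_i,\nu_i^+}\times\mathrm{CLR}^{\lambda_{i-1}}_{\alpha_i,\nu_i^-}$. $D(\nu)$ = set of $T$ lying in some $\underline{\mathrm{CLR}}^\lambda_{\alpha,\nu}$ with $\lambda,\alpha\in\mathcal P^k$. For $\lambda_1\in\mathcal P$: $\lambda(\lambda_1)=(\lambda_i)_i$ with $\lambda_i=\lambda_1+\sum_{j=2}^i\mathrm{wt}(T_j)$, $\alpha(\lambda_1)=(\alpha_i)_i$ with $\alpha_i=\lambda_1-\mathrm{wt}(T_i^+)+\sum_{j=2}^i\mathrm{wt}(T_j)$. $\lambda_{\min}(T)$ is the coordinatewise (in $\omega$-coordinates) maximum of $S_i^\pm=\varepsilon(T_i^\pm)+\mathrm{wt}(T_i^+)-\sum_{j=2}^i\mathrm{wt}(T_j)$, $i=1,\dots,k$; it is a partition. *)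

From mathcomp Require Import all_boot all_order all_algebra.
Set Implicit Arguments. Unset Strict Implicit. Unset Printing Implicit Defensive.
Import Order.TTheory GRing.Theory Num.Theory.
Local Open Scope ring_scope.

(* CONVENTION (0-based): x : wt represents sum_j (x j) eps_{j+1}; only
   finitely supported x are elements of Lambda (see [finsupp]).           *)
Definition wt := nat -> int.

Definition finsupp (x : wt) : Prop := exists N : nat, forall j, (N <= j)%N -> x j = 0.

Definition addw (x y : wt) : wt := fun j => x j + y j.
Definition subw (x y : wt) : wt := fun j => x j - y j.

(* omega-coordinate of x at omega_{i+1} = eps_1 + ... + eps_{i+1}:
   x = sum_i c_i omega_{i+1}  with  c_i = x_i - x_{i+1}. *)
Definition omega_coord (x : wt) (i : nat) : int := x i - x i.+1.

(* element of Lambda with given omega-coordinates c, all of which vanish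
   from index N on: sum_{i<N} c_i omega_{i+1}. *)
Definition from_omega (c : nat -> int) (N : nat) : wt :=
  fun j => \sum_(j <= i < N) c i.

Definition is_partition (x : wt) : Prop :=
  finsupp x /\ forall i, 0 <= omega_coord x i.

Definition wle (y x : wt) : Prop := forall i, 0 <= omega_coord (subw x y) i.

(* A tableau is the list of its rows (top row first), each row listed left
   to right.  CONVENTION (0-based letters): the nat entry v stands for the
   positive integer v+1.  Rows are nonempty (so the representation is
   unique). *)
Definition tab := seq (seq nat).

Definition is_SST (nu : wt) (t : tab) : Prop :=
  [/\ all (fun row => row != [::]) t,
      forall r, (size (nth [::] t r))%:Z = nu r,
      forall r, sorted leq (nth [::] t r) &
      forall r c, (c < size (nth [::] t r.+1))%N ->
        (nth 0%N (nth [::] t r) c < nth 0%N (nth [::] t r.+1) c)%N].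

Definition read (t : tab) : seq nat := flatten (rev t).

Definition wtT (t : tab) : wt := fun j => (count_mem j (read t))%:Z.

(* Signature rule on words: letter i.+1 (i.e. i+2) is an opening bracket,
   letter i (i.e. i+1) a closing one; [unm] returns the stack (top first)
   of the positions of the unmatched letters i.+1. *)
Fixpoint unm (i : nat) (w : seq nat) (k : nat) (st : seq nat) : seq nat :=
  match w with
  | [::] => st
  | x :: w' =>
      if x == i.+1 then unm i w' k.+1 (k :: st)
      else if x == i then unm i w' k.+1 (behead st)
      else unm i w' k.+1 st
  end.

(* Kashiwara operator e_i on words: change the leftmost unmatched i.+1
   into i; None (= 0) if there is none. *)
Definition e_word (i : nat) (w : seq nat) : option (seq nat) :=
  match unm i w 0 [::] with
  | [::] => None
  | p :: s => Some (set_nth 0%N w (last p s) i)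
  end.

Definition eT (i : nat) (t : tab) : option tab :=
  omap (fun w => rev (reshape (map size (rev t)) w)) (e_word i (read t)).

Definition eT_iter (i m : nat) (t : tab) : option tab :=
  iter m (fun o => obind (eT i) o) (Some t).

(* eps_i(T) = max { m >= 0 : e_i^m T <> 0 }  (each application of e_i
   lowers the number of letters i.+1, which bounds m). *)
Definition eps_i (i : nat) (t : tab) : nat :=
  \max_(m < (count_mem i.+1 (read t)).+1 | eT_iter i m t != None) m.

Definition maxletter (t : tab) : nat := \max_(x <- read t) x.

(* eps(T) = sum_i eps_i(T) omega_i  (eps_i vanishes beyond the letters) *)
Definition epsT (t : tab) : wt :=
  from_omega (fun i => (eps_i i t)%:Z) (maxletter t).+1.

Definition CLR (lam alp nu : wt) (t : tab) : Prop :=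
  [/\ is_SST nu t, wle (epsT t) alp & forall j, alp j + wtT t j = lam j].

(* Families of k objects are functions on nat used on 1..k. *)
Definition prevk (k i : nat) : nat := if i == 1%N then k else i.-1.

Section Tuples.
Variables (k : nat) (nup num : nat -> wt) (Tp Tm : nat -> tab).

Definition uCLR (lam alp : nat -> wt) : Prop :=
  forall i, (1 <= i <= k)%N ->
    CLR (lam i) (alp i) (nup i) (Tp i) /\ CLR (lam (prevk k i)) (alp i) (num i) (Tm i).

Definition inD : Prop :=
  exists lam alp : nat -> wt,
    (forall i, (1 <= i <= k)%N -> is_partition (lam i) /\ is_partition (alp i))
    /\ uCLR lam alp.

Definition wtTi (i : nat) : wt := subw (wtT (Tp i)) (wtT (Tm i)).

Definition sumwt (i : nat) : wt := fun j => \sum_(2 <= j' < i.+1) wtTi j' j.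

Definition lamOf (l1 : wt) : nat -> wt := fun i => addw l1 (sumwt i).
Definition alpOf (l1 : wt) : nat -> wt :=
  fun i => addw (subw l1 (wtT (Tp i))) (sumwt i).

Definition Sp (i : nat) : wt := subw (addw (epsT (Tp i)) (wtT (Tp i))) (sumwt i).
Definition Sm (i : nat) : wt := subw (addw (epsT (Tm i)) (wtT (Tp i))) (sumwt i).

(* bound beyond which all the above vectors vanish *)
Definition Nbound : nat :=
  (\max_(1 <= i < k.+1) maxn (maxletter (Tp i)) (maxletter (Tm i))).+1.

Definition lam_min : wt :=
  from_omega (fun c => \big[Num.max/omega_coord (Sp 1) c]_(1 <= i < k.+1)
                         Num.max (omega_coord (Sp i) c) (omega_coord (Sm i) c))
             Nbound.
End Tuples.

From Pilot Require Import Defs.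
From mathcomp Require Import all_boot all_order all_algebra zify.
Set Implicit Arguments. Unset Strict Implicit. Unset Printing Implicit Defensive.

(* For a given lambda_1, the tuples lambda(lambda_1), alpha(lambda_1) always
   satisfy the weight conditions of CLR: for T_i^+ by construction, for T_i^-
   with i >= 2 by telescoping, and for T_1^- because the weights of
   T_2, ..., T_k, T_1 sum to zero, as they do for any element of D(nu).  So
   membership in S_T reduces to eps(T_i^+-) <= alpha_i, which is exactly
   S_i^+- <= lambda_1 in omega-coordinates.  Hence S_T is the set of
   partitions above the join lambda_min(T) of the S_i^+-.  This join is itself
   a partition because S_1^+ = eps(T_1^+) + wt(T_1^+) is dominant, i.e.
   phi_i >= 0: eps_i is at least the number of letters i+1 left unmatched by
   the signature rule, and every other letter i+1 is matched by a letter i. *)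

Section Signature.
Variable i : nat.

Lemma unm_cat a b k st :
  unm i (a ++ b) k st = unm i b (k + size a) (unm i a k st).
Proof.
elim: a k st => [|x a IH] k st /=; first by rewrite addn0.
by case: ifP => _; [|case: ifP => _]; rewrite IH addSnnS.
Qed.

Lemma mem_unm w k st x :
  x \in unm i w k st -> x \in st \/ (k <= x < k + size w).
Proof.
elim: w k st => [|y w IH] k st /=; first by left.
have step st' : (x \in st' -> x \in st \/ (k <= x < k + (size w).+1)) ->
    x \in unm i w k.+1 st' -> x \in st \/ (k <= x < k + (size w).+1).
  move=> Hst /IH [/Hst //|/andP [h1 h2]]; right; apply/andP; split; lia.
case: ifP => _; [|case: ifP => _]; apply: step.
- rewrite inE => /orP [/eqP->|]; [right; apply/andP; split; lia|by left].
- by move/mem_behead; left.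
- by left.
Qed.

(* The signature rule can pop the stack it starts with, but never rewrites
   what lies below. *)
Lemma unm_stack_cat w k top st :
  exists d, unm i w k (top ++ st) = unm i w k top ++ drop d st.
Proof.
elim: w k top st => [|y w IH] k top st /=; first by exists 0; rewrite drop0.
case: ifP => _; [|case: ifP => _].
- exact: (IH k.+1 (k :: top) st).
- case: top => [|z top] /=; last exact: IH.
  have [d ->] := IH k.+1 [::] (behead st).
  by exists d.+1; rewrite -drop1 drop_drop addn1.
- exact: IH.
Qed.

Lemma size_unm_le w k st : size (unm i w k st) <= size st + count_mem i.+1 w.
Proof.
elim: w k st => [|y w IH] k st /=; first by rewrite addn0.
have := IH k.+1 (k :: st); have := IH k.+1 (behead st); have := IH k.+1 st.
have : size (behead st) <= size st by case: st => //= *; lia.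
case E1: (y == i.+1); [|case E2: (y == i)]; rewrite /= ?eqxx /= ?E1 ?E2; lia.
Qed.

Lemma count_succ_le_size_unm w k st :
  count_mem i.+1 w + size st <= size (unm i w k st) + count_mem i w.
Proof.
elim: w k st => [|y w IH] k st /=; first by rewrite addn0.
have := IH k.+1 (k :: st); have := IH k.+1 (behead st); have := IH k.+1 st.
have : (size st).-1 <= size (behead st) by case: st => //= *; lia.
have ne : (i == i.+1) = false by apply/negbTE; rewrite neq_ltn ltnSn.
have ne' : (i.+1 == i) = false by apply/negbTE; rewrite neq_ltn ltnSn orbT.
case E1: (y == i.+1);
  [move/eqP: E1 => ?; subst y|case E2: (y == i); [move/eqP: E2 => ?; subst y|]];
  rewrite /= ?eqxx ?ne ?ne' /= ?E1 ?E2; lia.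
Qed.

(* The bottom of the stack is the leftmost unmatched letter i.+1; it splits
   the word into a fully matched prefix and the rest. *)
Lemma unm_last_split w p s : unm i w 0 [::] = p :: s ->
  exists a b, [/\ w = a ++ i.+1 :: b, unm i a 0 [::] = [::] &
                  p :: s = rcons (unm i b (size a).+1 [::]) (size a)].
Proof.
move=> Ew; set q := last p s.
have q_in : q \in unm i w 0 [::] by rewrite Ew mem_last.
have q_lt : q < size w by case: (mem_unm q_in) => //= /andP [].
set a := take q w; set x := nth 0 w q; set b := drop q.+1 w.
have Ewab : w = a ++ x :: b by rewrite /a /x /b -drop_nth // cat_take_drop.
have size_a : size a = q by rewrite /a size_take q_lt.
set S := unm i a 0 [::]; set st := unm i [:: x] q S.
have S_lt z : z \in S -> z < q by move/mem_unm => [//|/andP [_]]; rewrite size_a.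
have [d Eunm] := unm_stack_cat b q.+1 [::] st.
have {}Eunm : p :: s = unm i b q.+1 [::] ++ drop d st.
  by rewrite -Ew {1}Ewab -cat1s catA !unm_cat size_cat size_a addn1 -Eunm.
have q_st : q \in drop d st.
  have q_notin : q \notin unm i b q.+1 [::].
    by apply/negP => /mem_unm [//|]; rewrite ltnn.
  by move: q_in; rewrite Ew Eunm mem_cat (negbTE q_notin).
have Ex : x = i.+1.
  move: (mem_drop q_st); rewrite /st /=; case: ifP => [/eqP //|_].
  by case: ifP => _ => [/mem_behead|] /S_lt; rewrite ltnn.
rewrite /st Ex /= eqxx in q_st Eunm.
have d0 : d = 0 by case: d q_st {Eunm} => //= d /mem_drop /S_lt; rewrite ltnn.
rewrite d0 drop0 in Eunm.
have S0 : S = [::].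
  case ES: S => [//|y S']; move: (congr1 (last 0) Eunm).
  rewrite ES /= last_cat /= -/q => Eq.
  by move: (mem_last y S'); rewrite -Eq -ES => /S_lt; rewrite ltnn.
exists a, b; rewrite -Ex -Ewab size_a; split=> //.
by rewrite Eunm S0 cats1.
Qed.

Lemma e_word_unm w : 0 < size (unm i w 0 [::]) ->
  exists w', [/\ e_word i w = Some w', size w' = size w &
    size (unm i w' 0 [::]) = (size (unm i w 0 [::])).-1].
Proof.
rewrite /e_word; case Ew: (unm i w 0 [::]) => [|p s] // _.
have [a [b [-> Ea Eps]]] := unm_last_split Ew.
have -> : last p s = size a by rewrite -[last p s]/(last 0 (p :: s)) Eps last_rcons.
have ne : (i == i.+1) = false by apply/negbTE; rewrite neq_ltn ltnSn.
exists (a ++ i :: b); split.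
- by congr Some; elim: a {Ea Eps} => //= y a ->.
- by rewrite !size_cat.
- by rewrite Eps size_rcons unm_cat Ea add0n /= ne eqxx.
Qed.

Lemma eT_iter_unm m t : m <= size (unm i (read t) 0 [::]) -> eT_iter i m t != None.
Proof.
elim: m t => [|m IH] t Hm //.
have [w' [Ew Sw Su]] := e_word_unm (leq_trans (ltn0Sn m) Hm).
rewrite /eT_iter iterSr /= /eT Ew /=; apply: IH.
rewrite /read revK reshapeKr; last by rewrite Sw size_flatten.
rewrite Su; lia.
Qed.

Lemma size_unm_le_eps_i t : size (unm i (read t) 0 [::]) <= eps_i i t.
Proof.
have Hlt : size (unm i (read t) 0 [::]) < (count_mem i.+1 (read t)).+1.
  by rewrite ltnS; exact: size_unm_le.
apply: (@leq_bigmax_cond _ _ (fun m : 'I_ _ => nat_of_ord m) (Ordinal Hlt)).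
exact: eT_iter_unm.
Qed.

Lemma count_succ_le_eps_i t :
  count_mem i.+1 (read t) <= eps_i i t + count_mem i (read t).
Proof.
have := count_succ_le_size_unm (read t) 0 [::]; have := size_unm_le_eps_i t.
rewrite /= addn0; lia.
Qed.

End Signature.

Import Order.TTheory GRing.Theory Num.Theory.
Local Open Scope ring_scope.

Lemma wleP (y x : wt) : wle y x <-> forall c, omega_coord y c <= omega_coord x c.
Proof. by rewrite /wle /omega_coord /subw; split=> h c; move: (h c); lia. Qed.

Lemma wle_trans (x y z : wt) : wle x y -> wle y z -> wle x z.
Proof. by move=> /wleP h1 /wleP h2; apply/wleP => c; exact: le_trans (h1 c) (h2 c). Qed.

Lemma omega_coord_from_omega f N c :
  omega_coord (from_omega f N) c = if (c < N)%N then f c else 0.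
Proof.
rewrite /omega_coord /from_omega; case: ltnP => h; first by rewrite big_ltn // addrK.
by rewrite !big_geq ?subrr // ltnW.
Qed.

Definition vanishes_from (N : nat) (x : wt) := forall j, (N <= j)%N -> x j = 0.

Lemma vanishes_fromW M N x : (M <= N)%N -> vanishes_from M x -> vanishes_from N x.
Proof. by move=> MN h j Nj; apply: h; exact: leq_trans Nj. Qed.

Lemma vanishes_from_omega f N : vanishes_from N (from_omega f N).
Proof. by move=> j Nj; rewrite /from_omega big_geq. Qed.

Lemma omega_coord_vanishes N x c :
  vanishes_from N x -> (N <= c)%N -> omega_coord x c = 0.
Proof. by move=> h Nc; rewrite /omega_coord !h ?subrr //; lia. Qed.

Lemma epsT_vanishes t : vanishes_from (maxletter t).+1 (epsT t).
Proof. exact: vanishes_from_omega. Qed.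

Lemma wtT_vanishes t : vanishes_from (maxletter t).+1 (wtT t).
Proof.
move=> j lt_j; apply/eqP; rewrite /wtT eqz_nat; apply/eqP/count_memPn/negP => jt.
have := @leq_bigmax_seq _ (read t) xpredT id j jt isT.
by rewrite -/(maxletter t); lia.
Qed.

Lemma omega_coord_epsT_wtT_ge0 t c :
  0 <= omega_coord (epsT t) c + omega_coord (wtT t) c.
Proof.
rewrite /epsT omega_coord_from_omega; case: ltnP => hc.
  by rewrite /omega_coord /wtT; have := count_succ_le_eps_i c t; lia.
by rewrite add0r /omega_coord (@wtT_vanishes t c.+1) ?subr0 // /wtT; lia.
Qed.

Lemma partition_decomposition (m l : wt) : is_partition m ->
  (is_partition l /\ wle m l) <->
  exists d, is_partition d /\ forall j, l j = m j + d j.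
Proof.
move=> [[M hM] m_dom]; split.
- move=> [[[L hL] _] /wleP l_ge_m]; exists (subw l m); split.
    split=> [|c]; first by exists (maxn M L) => j hj; rewrite /subw hM ?hL ?subrr //; lia.
    by have := l_ge_m c; rewrite /omega_coord /subw; lia.
  by move=> j; rewrite /subw addrC subrK.
- move=> [d [[[D hD] d_dom] El]]; split; last first.
    by apply/wleP => c; have := d_dom c; rewrite /omega_coord !El; lia.
  split=> [|c]; first by exists (maxn M D) => j hj; rewrite El hM ?hD ?addr0 //; lia.
  by have := m_dom c; have := d_dom c; rewrite /omega_coord !El; lia.
Qed.

Section Tuples.
Variables (k : nat) (nup num : nat -> wt) (Tp Tm : nat -> tab).
Local Notation Nb := (Nbound k Tp Tm).
Local Notation Sp := (Sp Tp Tm).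
Local Notation Sm := (Sm Tp Tm).
Local Notation sumwt := (sumwt Tp Tm).
Local Notation wtTi := (wtTi Tp Tm).

Lemma sumwt1 j : sumwt 1 j = 0.
Proof. by rewrite /Defs.sumwt big_geq. Qed.

Lemma sumwtS n j : (0 < n)%N -> sumwt n.+1 j = sumwt n j + wtTi n.+1 j.
Proof. by move=> n_gt0; rewrite /Defs.sumwt big_nat_recr. Qed.

Lemma maxletter_lt_Nbound i : (1 <= i <= k)%N ->
  (maxletter (Tp i) < Nb)%N /\ (maxletter (Tm i) < Nb)%N.
Proof.
move=> hi; have := @leq_bigmax_seq _ (index_iota 1 k.+1) xpredT
  (fun i => maxn (maxletter (Tp i)) (maxletter (Tm i))) i
  ltac:(rewrite mem_index_iota; lia) isT.
by rewrite /Nbound !ltnS => h; split; apply: leq_trans h; rewrite ?leq_maxl ?leq_maxr.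
Qed.

Lemma sumwt_vanishes i : (i <= k)%N -> vanishes_from Nb (sumwt i).
Proof.
move=> hi c hc; rewrite /Defs.sumwt big1_seq // => j /andP [_].
rewrite mem_index_iota => hj; have [hp hm] := maxletter_lt_Nbound (i := j) ltac:(lia).
by rewrite /Defs.wtTi /subw !(@wtT_vanishes _ c) ?subr0 //; lia.
Qed.

Lemma Sp_Sm_vanish i : (1 <= i <= k)%N ->
  vanishes_from Nb (Sp i) /\ vanishes_from Nb (Sm i).
Proof.
move=> hi; have [hp hm] := maxletter_lt_Nbound hi.
have hs := sumwt_vanishes (i := i) ltac:(lia).
have vp := vanishes_fromW hp (@wtT_vanishes (Tp i)).
have ep := vanishes_fromW hp (@epsT_vanishes (Tp i)).
have em := vanishes_fromW hm (@epsT_vanishes (Tm i)).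
split=> c hc; rewrite /Defs.Sp /Defs.Sm /subw /addw ?(ep c hc) ?(em c hc).
all: by rewrite (vp c hc) (hs c hc) addr0 subr0.
Qed.

Lemma Sp1_dominant c : 0 <= omega_coord (Sp 1) c.
Proof.
have := omega_coord_epsT_wtT_ge0 (Tp 1) c.
by rewrite /omega_coord /Defs.Sp /subw /addw !sumwt1; lia.
Qed.

Local Notation lam_min_coord c := (\big[Num.max/omega_coord (Sp 1) c]_(1 <= i < k.+1)
  Num.max (omega_coord (Sp i) c) (omega_coord (Sm i) c)).

Lemma omega_coord_lam_min c :
  omega_coord (lam_min k Tp Tm) c = if (c < Nb)%N then lam_min_coord c else 0.
Proof. exact: omega_coord_from_omega. Qed.

Lemma lam_min_partition : is_partition (lam_min k Tp Tm).
Proof.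
split; first by exists Nb; exact: vanishes_from_omega.
move=> c; rewrite omega_coord_lam_min; case: ifP => // _.
exact: le_trans (Sp1_dominant c) (bigmax_ge_id _ _ _ _).
Qed.

Lemma lam_min_ub i : (1 <= i <= k)%N ->
  wle (Sp i) (lam_min k Tp Tm) /\ wle (Sm i) (lam_min k Tp Tm).
Proof.
move=> hi; have [vp vm] := Sp_Sm_vanish hi.
suff bnd c : Num.max (omega_coord (Sp i) c) (omega_coord (Sm i) c)
    <= omega_coord (lam_min k Tp Tm) c.
  by split; apply/wleP => c; apply: le_trans (bnd c); rewrite le_max lexx ?orbT.
rewrite omega_coord_lam_min; case: ltnP => hc.
  apply: (le_bigmax_seq _ i xpredT
    (fun i => Num.max (omega_coord (Sp i) c) (omega_coord (Sm i) c))) => //.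
  by rewrite mem_index_iota; lia.
by rewrite !(omega_coord_vanishes _ hc) // maxxx.
Qed.

Lemma wle_epsT_Tp_alpOf l1 i :
  wle (epsT (Tp i)) (alpOf Tp Tm l1 i) <-> wle (Sp i) l1.
Proof.
rewrite /wle /omega_coord /subw /alpOf /Defs.Sp /addw /subw.
by split=> h c; move: (h c); lia.
Qed.

Lemma wle_epsT_Tm_alpOf l1 i :
  wle (epsT (Tm i)) (alpOf Tp Tm l1 i) <-> wle (Sm i) l1.
Proof.
rewrite /wle /omega_coord /subw /alpOf /Defs.Sm /addw /subw.
by split=> h c; move: (h c); lia.
Qed.

Lemma alpOf_add_wtT_Tm l1 i j : (1 <= i <= k)%N ->
  sumwt k j + wtTi 1 j = 0 ->
  alpOf Tp Tm l1 i j + wtT (Tm i) j = lamOf Tp Tm l1 (prevk k i) j.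
Proof.
move=> hi cyc; rewrite /alpOf /lamOf /addw /subw /prevk.
case: eqP => [->|ne1]; first by move: cyc; rewrite sumwt1 /Defs.wtTi /subw; lia.
by case: i hi ne1 => [|i] // hi ne1; rewrite sumwtS /Defs.wtTi /subw /=; lia.
Qed.

Hypothesis k_gt0 : (0 < k)%N.

Lemma lam_min_least l : (forall i, (1 <= i <= k)%N -> wle (Sp i) l /\ wle (Sm i) l) ->
  wle (lam_min k Tp Tm) l.
Proof.
move=> hl; have [/wleP Sp1_le _] := hl 1%N ltac:(lia).
apply/wleP => c; rewrite omega_coord_lam_min; case: ltnP => hc.
  rewrite big_seq; apply: bigmax_le => // i; rewrite mem_index_iota => hi.
  by have [/wleP hp /wleP hm] := hl i hi; rewrite ge_max hp hm.
by have [v1 _] := Sp_Sm_vanish (i := 1) ltac:(lia); rewrite -(omega_coord_vanishes v1 hc).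
Qed.

Lemma wle_lam_minP l : wle (lam_min k Tp Tm) l <->
  forall i, (1 <= i <= k)%N -> wle (Sp i) l /\ wle (Sm i) l.
Proof.
split; last exact: lam_min_least.
by move=> hl i /lam_min_ub [hp hm]; split; apply: wle_trans hl.
Qed.

Lemma sumwt_cycle lam alp : uCLR k nup num Tp Tm lam alp ->
  forall j, sumwt k j + wtTi 1 j = 0.
Proof.
move=> HU j.
have wtTiE i : (1 <= i <= k)%N -> wtTi i j = lam i j - lam (prevk k i) j.
  move=> hi; have [[_ _ Ep] [_ _ Em]] := HU i hi.
  by rewrite /Defs.wtTi /subw -(Ep j) -(Em j); lia.
have sumwtE n : (1 <= n <= k)%N -> sumwt n j = lam n j - lam 1%N j.
  elim: n => [|[|n] IH] // hn; first by rewrite sumwt1 subrr.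
  rewrite sumwtS // IH ?wtTiE //; last lia.
  by rewrite /prevk /=; lia.
by rewrite sumwtE ?wtTiE ?leqnn ?k_gt0 // /prevk /=; lia.
Qed.

Lemma uCLR_lamOf_alpOfP l1 : inD k nup num Tp Tm ->
  uCLR k nup num Tp Tm (lamOf Tp Tm l1) (alpOf Tp Tm l1) <->
  forall i, (1 <= i <= k)%N -> wle (Sp i) l1 /\ wle (Sm i) l1.
Proof.
move=> [lam [alp [_ HU]]]; split.
  move=> HU' i /HU' [[_ hp _] [_ hm _]].
  by split; [apply/wle_epsT_Tp_alpOf | apply/wle_epsT_Tm_alpOf].
move=> hl i hi; have [[sp _ _] [sm _ _]] := HU i hi; have [hp hm] := hl i hi.
split; split=> //.
- exact/wle_epsT_Tp_alpOf.
- by move=> j; rewrite /alpOf /lamOf /addw /subw; lia.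
- exact/wle_epsT_Tm_alpOf.
- by move=> j; exact: alpOf_add_wtT_Tm hi (sumwt_cycle HU j).
Qed.

End Tuples.

Theorem mainTheorem10 (k : nat) (nup num : nat -> wt) (Tp Tm : nat -> tab) :
  (1 <= k)%N ->
  (forall i, (1 <= i <= k)%N -> is_partition (nup i) /\ is_partition (num i)) ->
  inD k nup num Tp Tm ->
  forall l1 : wt,
    (is_partition l1 /\
     uCLR k nup num Tp Tm (lamOf Tp Tm l1) (alpOf Tp Tm l1))
    <->
    (exists delta : wt, is_partition delta /\
       forall j, l1 j = lam_min k Tp Tm j + delta j).
Proof.
move=> k_gt0 _ hD l1.
apply: iff_trans (partition_decomposition l1 (lam_min_partition k Tp Tm)).
have uCLRP := uCLR_lamOf_alpOfP k_gt0 l1 hD.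
have lam_minP := wle_lam_minP Tp Tm k_gt0 l1.
by split=> -[pl1 h]; split=> //; [apply/lam_minP/uCLRP | apply/uCLRP/lam_minP].
Qed.
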